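(* Let $n\geq0$ and $F\in\mathbf{F}(n)$. Then $f_F=\sum_{G\in\mathbf{F}(n),\,G\leq m(F)}\mu(G,m(F))\,G$.
   Context: Let $K$ be a field. Planar rooted trees have their children linearly ordered left to right; a planar forest is a finite, possibly empty, sequence $t_1\cdots t_n$ of planar rooted trees ($1$ = empty forest); $\mathbf{F}(n)$ is the (finite) set of planar forests with $n$ vertices. $\mathcal{H}$ is the free associative unital $K$-algebra on planar rooted trees, with basis the planar forests and product concatenation. $B^+(F)$ is the tree obtained by grafting the trees of $F$ on a new common root; $\varepsilon(F)=\delta_{F,1}$. $\Delta$ is the unique linear map with $\Delta(1)=1\otimes1$, $\Delta(xy)=(x\otimes1)\Delta(y)+\Delta(x)(1\otimes y)-x\otimes y$, $\Delta(B^+(x))=B^+(x)\otimes 1+(\mathrm{Id}\otimes B^+)\Delta(x)$. $\gamma$ is linear with $\gamma(t_1\cdots t_n)=\delta_{t_1,\bullet}t_2\cdots t_n$ ($\bullet$ the one-vertex tree), $\gamma(1)=0$. $\langle-,-\rangle$ is the unique bilinear form with $\langle1,x\rangle=\varepsilon(x)$, $\langle xy,z\rangle=\langle y\otimes x,\Delta(z)\rangle$ (with $\langle a\otimes b,c\otimes d\rangle=\langle a,c\rangle\langle b,d\rangle$), $\langle B^+(x),y\rangle=\langle x,\gamma(y)\rangle$; it is non-degenerate and forests of different weights are orthogonal; $(f_F)$ is the dual basis: $\langle f_F,G\rangle=\delta_{F,G}$ for all forests $G$. $m$ is the map on planar forests defined recursively by $m(1)=1$, $m(B^+(F_1)F_2)=B^+(m(F_2))m(F_1)$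 (it preserves the number of vertices). Order on forests: an admissible transformation chooses a vertex $s$ which is the leftmost child of its parent $u$; if $u$ is not a root, with parent $r$, the subtree rooted at $s$ is moved to become a child of $r$ immediately to the left of $u$; if $u$ is a root, the subtree rooted at $s$ becomes a new tree immediately to the left of the tree of $u$; everything else unchanged. $F\leq G$ iff $G$ is obtained from $F$ by a finite (possibly empty) sequence of admissible transformations; this is a partial order on each $\mathbf{F}(n)$. $\mu:\mathbf{F}(n)^2\to K$ is the Möbius function of the poset $(\mathbf{F}(n),\leq)$: $\mu(F,G)=0$ if $F\not\leq G$, and $\sum_{G:\,F\leq G\leq H}\mu(F,G)=\delta_{F,H}$ whenever $F\leq H$. *)

From HB Require Import structures.
From mathcomp Require Import all_boot all_order all_algebra.
From mathcomp Require Import finmap monalg.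
Set Implicit Arguments.
Unset Strict Implicit.
Unset Printing Implicit Defensive.
Import GRing.Theory.
Local Open Scope ring_scope.

(* Planar forests.  A planar forest is either the empty forest [fone]  *)
(* or [BF C R] = B^+(C) R : the planar tree whose root has the forest *)
(* of subtrees C (left to right), followed (on its right) by the       *)
(* forest R.  Every planar forest t_1 ... t_k has a unique such        *)
(* decomposition (t_1 = B^+(C), R = t_2 ... t_k).                      *)
Inductive forest : Type :=
| fone : forest
| BF : forest -> forest -> forest.

Fixpoint enc (F : forest) : GenTree.tree unit :=
  match F with
  | fone => GenTree.Leaf tt
  | BF A B => GenTree.Node 0 [:: enc A; enc B]
  end.
Fixpoint dec (t : GenTree.tree unit) : forest :=
  match t with
  | GenTree.Node _ [:: a; b] => BF (dec a) (dec b)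
  | _ => fone
  end.
Lemma encK : cancel enc dec. Proof. by elim=> //= A -> B ->. Qed.
HB.instance Definition _ := Countable.copy forest (can_type encK).

Fixpoint nv (F : forest) : nat :=
  match F with fone => 0%N | BF A B => (nv A + nv B).+1 end.

(* concatenation (the product of H on the basis) *)
Fixpoint fcat (F G : forest) : forest :=
  match F with fone => G | BF A B => BF A (fcat B G) end.

Definition Bplus (F : forest) : forest := BF F fone.

Definition dot : forest := Bplus fone.

(* gamma on the basis: gamma(t_1 ... t_k) = delta_{t_1, dot} t_2...t_k,
   gamma(1) = 0; [None] stands for 0. *)
Definition gammaF (G : forest) : option forest :=
  match G with BF fone G2 => Some G2 | _ => None end.

Fixpoint m (F : forest) : forest :=
  match F with fone => fone | BF F1 F2 => BF (m F2) (m F1) end.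

Section Hopf.
Variable R : fieldType.

Definition H := {malg R[forest]}.
Definition HH := {malg R[(forest * forest)%type]}.

(* Coproduct on the basis, from the defining rules
   Delta(1) = 1 (x) 1,
   Delta(t y) = (t (x) 1) Delta(y) + Delta(t) (1 (x) y) - t (x) y   (t a tree),
   Delta(B^+(x)) = B^+(x) (x) 1 + (Id (x) B^+) Delta(x). *)
Fixpoint DeltaF (F : forest) : HH :=
  match F with
  | fone => << (fone, fone) >>
  | BF A B =>
      let t := Bplus A in
      let Dt : HH := << (t, fone) >> +
        \sum_(p <- msupp (DeltaF A)) << (DeltaF A)@_p *g (p.1, Bplus p.2) >> in
      \sum_(p <- msupp (DeltaF B)) << (DeltaF B)@_p *g (fcat t p.1, p.2) >>
      + \sum_(p <- msupp Dt) << Dt@_p *g (p.1, fcat p.2 B) >>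
      - << (t, B) >>
  end.

Definition Delta (x : H) : HH := \sum_(F <- msupp x) x@_F *: DeltaF F.

(* The pairing <F, G> on basis forests, by recursion on F using
   <1, x> = eps(x), <B^+(x), y> = <x, gamma(y)>,
   <t y, z> = <y (x) t, Delta(z)>  (t the first tree of the forest). *)
Fixpoint pairF (F G : forest) {struct F} : R :=
  match F with
  | fone => (G == fone)%:R
  | BF A B =>
      let pt (X : forest) := if gammaF X is Some X2 then pairF A X2 else 0 in
      if B == fone then pt G
      else \sum_(p <- msupp (DeltaF G)) (DeltaF G)@_p * pairF B p.1 * pt p.2
  end.

Definition pairH (x : H) (G : forest) : R :=
  \sum_(F <- msupp x) x@_F * pairF F G.

End Hopf.

Fixpoint enumF (fuel n : nat) : seq forest :=
  match fuel with
  | 0 => if n == 0%N then [:: fone] else [::]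
  | fuel'.+1 =>
      if n is n'.+1 then
        flatten [seq [seq BF a b | a <- enumF fuel' k, b <- enumF fuel' (n' - k)]
                | k <- iota 0 n]
      else [:: fone]
  end.
Definition forests (n : nat) : seq forest := enumF n n.

Lemma nv_eq0 F : (nv F == 0%N) = (F == fone). Proof. by case: F. Qed.

Lemma mem_enumF fuel n G : (n <= fuel)%N -> (G \in enumF fuel n) = (nv G == n).
Proof.
elim: fuel n G => [|f IH] n G.
  by rewrite leqn0 => /eqP -> /=; rewrite inE nv_eq0.
case: n => [|n'] Hn; first by rewrite /= inE nv_eq0.
have -> : enumF f.+1 n'.+1 = flatten [seq [seq BF a b | a <- enumF f k,
  b <- enumF f (n' - k)] | k <- iota 0 n'.+1] by [].
apply/flattenP/idP.
  case=> s /mapP [k]; rewrite mem_iota add0n => /andP [_ Hk] -> /allpairsP.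
  case=> [[a b]] /= [Ha Hb ->].
  rewrite IH in Ha; last by rewrite -ltnS (leq_trans Hk).
  rewrite IH in Hb; last by rewrite (leq_trans (leq_subr _ _)).
  by rewrite /= (eqP Ha) (eqP Hb) subnKC // -ltnS.
case: G => // A B /eqP HAB0.
have HAB : (nv A + nv B)%N = n' by case: HAB0.
exists [seq BF a b | a <- enumF f (nv A), b <- enumF f (n' - nv A)].
  apply/mapP; exists (nv A) => //; rewrite mem_iota add0n ltnS -HAB leq_addr //.
apply/allpairsP; exists (A, B) => /=; split => //.
  by rewrite IH //; apply: (@leq_trans n'); rewrite // -HAB leq_addr.
rewrite -HAB addKn IH //; apply: (@leq_trans n'); rewrite // -HAB leq_addl.
by [].
Qed.

Lemma mem_forests n G : (G \in forests n) = (nv G == n).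
Proof. exact: mem_enumF. Qed.

Definition Fn (n : nat) : finType := seq_sub (forests n).

Lemma nv_m F : nv (m F) = nv F.
Proof. by elim: F => //= A IHA B IHB; rewrite IHA IHB addnC. Qed.

Lemma m_mem n (G : Fn n) : m (ssval G) \in forests n.
Proof. by rewrite mem_forests nv_m -mem_forests (ssvalP G). Qed.

Definition mFn n (G : Fn n) : Fn n := SeqSub (m_mem G).

(* Admissible transformations.  In the representation above, a vertex *)
(* s that is the leftmost child of its parent u corresponds to a       *)
(* sub-forest  X = BF (BF S0 C') R  (u = B^+(s C'), s = B^+(S), R the   *)
(* trees to the right of u among the children of u's parent, or among *)
(* the roots if u is a root).  Moving the subtree of s immediately to  *)
(* the left of u gives  BF S (BF C' R), everything else unchanged.     *)
Fixpoint adm_steps (F : forest) : seq forest :=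
  match F with
  | fone => [::]
  | BF A B =>
      (if A is BF S0 C' then [:: BF S0 (BF C' B)] else [::])
      ++ [seq BF A' B | A' <- adm_steps A]
      ++ [seq BF A B' | B' <- adm_steps B]
  end.

Definition adm (F G : forest) : bool := G \in adm_steps F.

Definition fle n (F G : Fn n) : bool :=
  connect (fun X Y : Fn n => adm (ssval X) (ssval Y)) F G.

From HB Require Import structures.
From mathcomp Require Import all_boot all_order all_algebra.
From mathcomp Require Import finmap monalg.
From mathcomp Require Import zify.

(* With m the mirror map, <G, m(K)> is 1 if K <= G and 0 otherwise.  Both sides obey
   the same recursion in G = B^+(A) B: K lies below B^+(A) B exactly when repeatedly
   promoting leftmost children of its first tree to roots brings it to some B^+(P) Q
   with P <= A and Q <= B, and these splittings index the terms of Delta(m(K)) whose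
   right factor starts with the one-vertex tree; the sizes of the P's are distinct, so
   at most one splitting contributes.  Hence the Gram matrix of the pairing is the zeta
   function of F(n), and sum_{G <= m(F)} mu(G, m(F)) G pairs to the Kronecker delta at F.
   Uniqueness is nondegeneracy of the pairing: the zeta function is unitriangular with
   respect to the total depth of the vertices. *)

Set Implicit Arguments.
Unset Strict Implicit.
Unset Printing Implicit Defensive.
Import GRing.Theory.

Lemma mK : involutive m.
Proof. by elim=> //= A -> B ->. Qed.

Lemma m_eq_fone X : (m X == fone) = (X == fone).
Proof. by case: X. Qed.

Inductive leF : forest -> forest -> Prop :=
| leF_refl X : leF X X
| leF_step X Y Z : leF X Y -> adm Y Z -> leF X Z.

Lemma admBF_inv A B Z : adm (BF A B) Z ->
  [\/ exists S C, A = BF S C /\ Z = BF S (BF C B),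
      exists2 A', adm A A' & Z = BF A' B
    | exists2 B', adm B B' & Z = BF A B'].
Proof.
rewrite /adm /= !mem_cat => /or3P [].
- by case: A => //= S C; rewrite inE => /eqP ->; apply: Or31; exists S, C.
- by case/mapP => A' hA' ->; apply: Or32; exists A'.
- by case/mapP => B' hB' ->; apply: Or33; exists B'.
Qed.

Lemma adm_BFl A A' B : adm A A' -> adm (BF A B) (BF A' B).
Proof. by move=> h; rewrite /adm /= !mem_cat (map_f (BF^~ B) h) orbT. Qed.

Lemma adm_BFr A B B' : adm B B' -> adm (BF A B) (BF A B').
Proof. by move=> h; rewrite /adm /= !mem_cat (map_f (BF A) h) !orbT. Qed.

Lemma adm_rot S C B : adm (BF (BF S C) B) (BF S (BF C B)).
Proof. by rewrite /adm /= inE eqxx. Qed.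

Lemma adm_fone Y : ~~ adm Y fone.
Proof. by case: Y => // A B; apply/negP => /admBF_inv [[? [? []]] | [?] | [?]]. Qed.

Lemma adm_nv Y Z : adm Y Z -> nv Z = nv Y.
Proof.
elim: Y Z => // A IHA B IHB Z.
case/admBF_inv => [[S [C [-> ->]]] | [A' /IHA hA ->] | [B' /IHB hB ->]] /=; lia.
Qed.

(* The sum of the depths of all vertices; an admissible transformation moves a
   subtree one level up and so decreases it. *)
Fixpoint ds (F : forest) : nat :=
  match F with fone => 0 | BF A B => ds A + nv A + ds B end.

Lemma adm_ds Y Z : adm Y Z -> ds Z < ds Y.
Proof.
elim: Y Z => // A IHA B IHB Z.
case/admBF_inv => [[S [C [-> ->]]] | [A' hA ->] | [B' /IHB hB ->]] /=; try lia.
by rewrite (adm_nv hA); have := IHA _ hA; lia.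
Qed.

Lemma leF_adm Y Z : adm Y Z -> leF Y Z.
Proof. exact: leF_step (leF_refl Y). Qed.

Lemma leF_trans Y X Z : leF X Y -> leF Y Z -> leF X Z.
Proof. by move=> hXY hYZ; elim: hYZ hXY => // Y' Z' W _ IH a /IH h; exact: leF_step h a. Qed.

Lemma leF_nv X Y : leF X Y -> nv Y = nv X.
Proof. by elim=> // X' Y' Z' _ IH /adm_nv ->. Qed.

Lemma leF_ds X Y : leF X Y -> X = Y \/ ds Y < ds X.
Proof.
elim=> [|X' Y' Z' _ [<- | IH] a]; [by left | right; exact: adm_ds |].
by right; apply: ltn_trans (adm_ds a) IH.
Qed.

Lemma leF_fone X : leF X fone -> X = fone.
Proof.
by move eF : fone => G h; elim: h eF => // X' Y Z _ _ a eF; rewrite -eF in a; case/negP: (adm_fone Y).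
Qed.

Lemma leF_BF A B A' B' : leF A A' -> leF B B' -> leF (BF A B) (BF A' B').
Proof.
move=> hA hB; apply: (@leF_trans (BF A' B)).
  by elim: hA => [?|? ? ? _ IH a]; [exact: leF_refl | exact: leF_step IH (adm_BFl _ a)].
by elim: hB => [?|? ? ? _ IH a]; [exact: leF_refl | exact: leF_step IH (adm_BFr _ a)].
Qed.

(* The pairs [(P, Q)] such that [BF P Q] arises from [K] by repeatedly moving the
   leftmost child of the first tree to the root level. *)
Fixpoint splits (K : forest) : seq (forest * forest) :=
  match K with
  | fone => [::]
  | BF L R => (L, R) :: [seq (p.1, BF p.2 R) | p <- splits L]
  end.

Lemma splits_leF K p : p \in splits K -> leF K (BF p.1 p.2).
Proof.
elim: K p => //= L IHL R _ p; rewrite inE => /predU1P [-> | /mapP [q /IHL hq ->]] /=.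
  exact: leF_refl.
exact: leF_trans (leF_BF hq (leF_refl R)) (leF_adm (adm_rot _ _ _)).
Qed.

Lemma splits_nv K p : p \in splits K -> nv p.1 < nv K.
Proof.
elim: K p => //= L IHL R _ p; rewrite inE => /predU1P [-> | /mapP [q /IHL hq ->]] /=;
  lia.
Qed.

Lemma uniq_splits_nv K : uniq [seq nv p.1 | p <- splits K].
Proof.
elim: K => //= L IHL R _; rewrite -map_comp /= IHL andbT.
by apply/mapP => -[q /splits_nv + /= e]; rewrite -e ltnn.
Qed.

Lemma splits_trans K p q : p \in splits K -> q \in splits p.1 ->
  exists2 r, r \in splits K & r.1 = q.1 /\ leF r.2 (BF q.2 p.2).
Proof.
elim: K p q => //= L IHL R _ p q; rewrite inE => /predU1P [-> | /mapP [s hs ->]] /= hq.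
  exists (q.1, BF q.2 R); last by split => //; exact: leF_refl.
  by rewrite inE map_f ?orbT.
have [r hr [e1 e2]] := IHL _ _ hs hq.
exists (r.1, BF r.2 R); first by rewrite inE map_f ?orbT.
by split => //=; apply: leF_trans (leF_BF e2 (leF_refl R)) (leF_adm (adm_rot _ _ _)).
Qed.

Lemma leF_splits A B K : leF K (BF A B) ->
  exists2 p, p \in splits K & leF p.1 A /\ leF p.2 B.
Proof.
have [N] := ubnP (nv (BF A B)); elim: N A B K => // N IHN A B K hN hK.
move eG : (BF A B) hK => G hK; elim: hK A B eG hN => [X|X Y Z _ IH a] A B eG hN.
  by exists (A, B); [rewrite -eG mem_head | split; exact: leF_refl].
case: Y IH a => [//|A1 B1] IH a.
have hY : nv (BF A1 B1) < N.+1 by rewrite -(adm_nv a) -eG.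
have [p hp [h1 h2]] := IH _ _ erefl hY.
rewrite -eG in a; case/admBF_inv: a => [[S [C [eA1 [] -> ->]]] | [A' a [] -> ->] | [B' a [] -> ->]].
- subst A1; have [|q hq [h3 h4]] := IHN _ _ _ _ h1; first by move: hY => /=; lia.
  have [r hr [e1 e2]] := splits_trans hp hq.
  by exists r; rewrite ?e1 //; split => //; exact: leF_trans e2 (leF_BF h4 h2).
- by exists p => //; split => //; exact: leF_step h1 a.
- by exists p => //; split => //; exact: leF_step h2 a.
Qed.

Fixpoint leFb (K G : forest) : bool :=
  match G with
  | fone => K == fone
  | BF A B => has (fun p => leFb p.1 A && leFb p.2 B) (splits K)
  end.

Lemma leFP K G : reflect (leF K G) (leFb K G).
Proof.
elim: G K => [|A IHA B IHB] K /=.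
  by apply: (iffP eqP) => [-> | /leF_fone //]; exact: leF_refl.
apply: (iffP hasP) => [[p hp /andP [/IHA hA /IHB hB]] | /leF_splits [p hp [hA hB]]].
  exact: leF_trans (splits_leF hp) (leF_BF hA hB).
by exists p => //; apply/andP; split; [exact/IHA | exact/IHB].
Qed.

Lemma count_splits_le1 A K (P : pred (forest * forest)) :
  (count (fun p => leFb p.1 A && P p) (splits K) <= 1)%N.
Proof.
have sub : subpred (fun p : forest * forest => leFb p.1 A && P p) (fun p => nv p.1 == nv A).
  by move=> p /andP [/leFP /leF_nv -> _].
apply: leq_trans (sub_count sub (splits K)) _.
have <- := count_map (fun p => nv p.1) (pred1 (nv A)) (splits K).
by rewrite count_uniq_mem ?uniq_splits_nv ?leq_b1.
Qed.

Local Open Scope ring_scope.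

Lemma sumr_nat_has (R : nzRingType) (T : Type) (P : pred T) (s : seq T) :
  (count P s <= 1)%N -> \sum_(x <- s) (P x)%:R = (has P s)%:R :> R.
Proof.
elim: s => [|x s IH] /=; first by rewrite big_nil.
rewrite big_cons; case: (P x) => /= hs; last by rewrite add0r IH.
have hs0 : has P s = false by rewrite has_count; lia.
by rewrite IH ?hs0 ?addr0 //; lia.
Qed.

Section Pairing.
Variable R : fieldType.

Lemma mmap_idZ (T : choiceType) (h : T -> R) c (x : {malg R[T]}) :
  mmap idfun h (c *: x) = c * mmap idfun h x.
Proof.
rewrite (mmapEw (msuppZ_le _ _)) mmapE big_distrr /=.
by apply: eq_bigr => k _; rewrite mcoeffZ mulrA.
Qed.

Lemma mmap_sumU (T1 T2 : choiceType) (x : {malg R[T1]}) (f : T1 -> T2) (h : T2 -> R) :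
  mmap idfun h (\sum_(p <- msupp x) << x@_p *g f p >>) = mmap idfun (h \o f) x.
Proof. by rewrite raddf_sum /=; apply: eq_bigr => p _; rewrite mmapU. Qed.

Lemma mmap_DeltaF_fone (h : forest * forest -> R) :
  mmap idfun h (DeltaF R fone) = h (fone, fone).
Proof. by rewrite /= mmapU mul1r. Qed.

Lemma mmap_DeltaF_BF A B (h : forest * forest -> R) :
  mmap idfun h (DeltaF R (BF A B)) =
  mmap idfun (fun p => h (BF A p.1, p.2)) (DeltaF R B) +
  mmap idfun (fun p => h (p.1, BF p.2 B)) (DeltaF R A).
Proof.
rewrite [DeltaF R _]/= !raddfB !raddfD /= !mmap_sumU raddfD /= mmap_sumU !mmapU !mul1r.
by rewrite addrCA addrAC subrr add0r.
Qed.

Lemma mmap_DeltaF_counit X (f : forest -> R) :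
  mmap idfun (fun p => f p.1 * (p.2 == fone)%:R) (DeltaF R X) = f X.
Proof.
elim: X f => [|A _ B IHB] f; first by rewrite mmap_DeltaF_fone eqxx mulr1.
rewrite mmap_DeltaF_BF (IHB (f \o BF A)) [X in _ + X]big1 ?addr0 // => p _.
by rewrite /= !mulr0.
Qed.

Definition hgamma (h : forest -> R) (X : forest) : R :=
  if gammaF X is Some X2 then h X2 else 0.

Lemma mmap_DeltaF_gamma X (f h : forest -> R) :
  mmap idfun (fun p => f p.1 * hgamma h p.2) (DeltaF R X) =
  \sum_(q <- splits (m X)) h (m q.1) * f (m q.2).
Proof.
elim: X f => [|A _ B IHB] f; first by rewrite mmap_DeltaF_fone /= mulr0 big_nil.
rewrite mmap_DeltaF_BF (IHB (f \o BF A)) /= big_cons big_map !mK addrC mulrC.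
congr (_ + _); last by apply: eq_bigr => q _ /=; rewrite mK.
rewrite -(mmap_DeltaF_counit A (fun Y => f Y * h B)); apply: eq_bigr => p _ /=.
by case: p.2 => [|[|? ?] ?]; rewrite /= ?mulr0 ?mulr1.
Qed.

Lemma sum_splits_fone K (g : forest -> R) :
  \sum_(q <- splits K) g (m q.1) * (q.2 == fone)%:R = hgamma g (m K).
Proof.
case: K => [|L [|? ?]]; rewrite /= ?big_nil // big_cons big_map big1 ?addr0 ?mulr1 ?mulr0 //.
all: by move=> q _; rewrite mulr0.
Qed.

Lemma pairF_BF_m A B K :
  pairF R (BF A B) (m K) = \sum_(q <- splits K) pairF R A (m q.1) * pairF R B (m q.2).
Proof.
rewrite /=; case: eqP => [-> | _].
  by under [RHS]eq_bigr do rewrite [pairF R fone _]/= m_eq_fone; rewrite sum_splits_fone.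
transitivity (mmap idfun (fun p => pairF R B p.1 * hgamma (pairF R A) p.2) (DeltaF R (m K))).
  by apply: eq_bigr => p _; rewrite mulrA.
by rewrite mmap_DeltaF_gamma mK; apply: eq_bigr => q _; rewrite mulrC.
Qed.

Lemma pairF_m G K : pairF R G (m K) = (leFb K G)%:R.
Proof.
elim: G K => [|A IHA B IHB] K; first by rewrite /= m_eq_fone.
rewrite pairF_BF_m; under eq_bigr do rewrite IHA IHB -natrM mulnb.
exact/sumr_nat_has/count_splits_le1.
Qed.

Lemma pairF_nv G X : nv X != nv G -> pairF R G X = 0.
Proof.
by rewrite -[X]mK pairF_m nv_m; case: leFP => // /leF_nv ->; rewrite eqxx.
Qed.

Lemma pairH_sumZ (I : finType) (P : pred I) (c : I -> R) (f : I -> forest) G :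
  pairH (\sum_(i | P i) c i *: << f i >>) G = \sum_(i | P i) c i * pairF R (f i) G.
Proof.
rewrite [LHS](raddf_sum (mmap idfun (pairF R ^~ G))) /=; apply: eq_bigr => i _.
by rewrite mmap_idZ mmapU mul1r.
Qed.

Lemma pairHB (x y : H R) G : pairH (x - y) G = pairH x G - pairH y G.
Proof. exact: (raddfB (mmap idfun (pairF R ^~ G))). Qed.

Lemma pairH_eq0 (x : H R) : (forall G, pairH x G = 0) -> x = 0.
Proof.
move=> hx; apply/malgP => K; rewrite mcoeff0.
have [N] := ubnP (ds K); elim: N K => // N IHN K hK.
have [hKx | /mcoeff_outdom //] := boolP (K \in msupp x).
have := hx (m K); rewrite /pairH (big_fsetD1 K hKx) /= pairF_m.
rewrite (introT (leFP K K) (leF_refl K)) mulr1 big1_seq ?addr0 // => F /andP [_].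
rewrite in_fsetD1 pairF_m => /andP [hFK _]; case: leFP => [/leF_ds [eKF|hds] | _].
- by rewrite eKF eqxx in hFK.
- by rewrite IHN ?mul0r //; lia.
by rewrite mulr0.
Qed.

End Pairing.

Lemma sum_delta_comm (K : comPzRingType) (T : finType) (a b : T -> T -> K) :
  (forall i j, \sum_x a i x * b x j = (i == j)%:R) ->
  forall i j, \sum_x b i x * a x j = (i == j)%:R.
Proof.
pose mx c : 'M[K]_#|T| := \matrix_(k, l) c (enum_val k) (enum_val l).
have mxM c d k l : (mx c *m mx d) k l = \sum_x c (enum_val k) x * d x (enum_val l).
  rewrite mxE (reindex (@enum_val T T) (onW_bij _ (enum_val_bij T))) /=.
  by apply: eq_bigr => x _; rewrite !mxE.
move=> ab i j.
have ab1 : mx a *m mx b = 1%:M.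
  by apply/matrixP => k l; rewrite mxM ab mxE (inj_eq enum_val_inj).
have := congr1 (fun M : 'M[K]_#|T| => M (enum_rank i) (enum_rank j)) (mulmx1C ab1).
by rewrite /= mxM mxE !enum_rankK (inj_eq enum_rank_inj).
Qed.

Lemma fleP n (x y : Fn n) : reflect (leF (ssval x) (ssval y)) (fle x y).
Proof.
apply: (iffP connectP) => [[p] | hxy].
  elim: p x => [|z p IH] x /=; first by move=> _ ->; exact: leF_refl.
  by case/andP => a /IH h /h; exact: leF_trans (leF_adm a).
move eX : (ssval x) hxy => X; move eY : (ssval y) => Y hXY.
elim: hXY x y eX eY => [Z | X' Y' Z _ IH a] x y eX eY.
  by exists [::] => //; apply: val_inj; rewrite /= eX eY.
have hY' : Y' \in forests n by rewrite mem_forests -(adm_nv a) -eY -mem_forests (ssvalP y).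
have [p hp eY'] := IH x (SeqSub hY') eX erefl.
exists (rcons p y); last by rewrite last_rcons.
by rewrite rcons_path hp -eY' /= eY.
Qed.

Lemma fleE n (x y : Fn n) : fle x y = leFb (ssval x) (ssval y).
Proof. exact: sameP (fleP x y) (leFP _ _). Qed.

Section Moebius.
Variables (K : fieldType) (n : nat) (mu : Fn n -> Fn n -> K).
Hypothesis mu0 : forall G1 G2 : Fn n, ~~ fle G1 G2 -> mu G1 G2 = 0.
Hypothesis musum : forall G1 G3 : Fn n, fle G1 G3 ->
  \sum_(G2 : Fn n | fle G1 G2 && fle G2 G3) mu G1 G2 = (G1 == G3)%:R.

Lemma mu_zeta (a b : Fn n) : \sum_x mu a x * (fle x b)%:R = (a == b)%:R.
Proof.
have [ab | nab] := boolP (fle a b).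
  rewrite -musum // [RHS]big_mkcond; apply: eq_bigr => x _.
  have [ax | nax] := boolP (fle a x); first by case: (fle x b); rewrite ?mulr1 ?mulr0.
  by rewrite mu0 // mul0r.
have -> : (a == b) = false by apply: contraNF nab => /eqP ->; exact: connect0.
rewrite big1 // => x _; have [xb | _] := boolP (fle x b); last by rewrite mulr0.
by rewrite mu0 ?mul0r //; apply: contra nab => /connect_trans; apply.
Qed.

Lemma zeta_mu (a b : Fn n) : \sum_x (fle a x)%:R * mu x b = (a == b)%:R.
Proof. exact: (sum_delta_comm (b := fun x y => (fle x y)%:R) mu_zeta). Qed.

Lemma pairH_moebius (F : Fn n) X :
  pairH (\sum_(G | fle G (mFn F)) mu G (mFn F) *: << ssval G >>) X = (X == ssval F)%:R.
Proof.
rewrite pairH_sumZ; have [hX | hX] := boolP (m X \in forests n).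
  pose x : Fn n := SeqSub hX.
  transitivity (\sum_G (fle x G)%:R * mu G (mFn F)).
    rewrite big_mkcond; apply: eq_bigr => G _.
    rewrite -[X]mK pairF_m -[m X]/(ssval x) -fleE mulrC.
    by case: ifP => // /negbT /mu0 ->; rewrite mulr0.
  by rewrite zeta_mu -(inj_eq val_inj) /= (inj_eq (can_inj mK)).
have nvX : nv X != n by rewrite mem_forests nv_m in hX.
rewrite big1 => [|G _]; last first.
  by rewrite pairF_nv ?mulr0 //; move: (ssvalP G); rewrite mem_forests => /eqP ->.
case: eqP => // eXF; by move: nvX; rewrite eXF -mem_forests (ssvalP F).
Qed.

End Moebius.

Theorem corollary39 (K : fieldType) (n : nat) (F : Fn n)
    (mu : Fn n -> Fn n -> K)
    (mu0 : forall G1 G2 : Fn n, ~~ fle G1 G2 -> mu G1 G2 = 0)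
    (musum : forall G1 G3 : Fn n, fle G1 G3 ->
       \sum_(G2 : Fn n | fle G1 G2 && fle G2 G3) mu G1 G2 = (G1 == G3)%:R) :
  let S : H K := \sum_(G : Fn n | fle G (mFn F)) mu G (mFn F) *: << ssval G >> in
  (forall G : forest, pairH S G = (G == ssval F)%:R) /\
  (forall f : H K, (forall G : forest, pairH f G = (G == ssval F)%:R) -> f = S).
Proof.
move=> S; have dualS X : pairH S X = (X == ssval F)%:R := pairH_moebius mu0 musum F X.
split=> // f hf; apply/eqP; rewrite -subr_eq0; apply/eqP/pairH_eq0 => X.
by rewrite pairHB hf dualS subrr.
Qed.
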